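(* Let $G$ be a planar PCC graph and let $\sigma$ be a face with $|\sigma|=N\ge 42$. Let $A_1,A_5,A_6$ be the sets of vertices $v$ on the boundary of $\sigma$ with face vector $f(v)=(3,3,3,N)$, $(3,5,N)$, $(3,6,N)$ respectively. Let $\mathcal T$ be the set of triangles $\tau$ whose vertex set is $\{v,v_1,v_2\}$ for some vertices with $v_1,v_2\in A_1\cup A_5\cup A_6$, and let $C_1$ be the set of vertices not on the boundary of $\sigma$ that lie on some triangle of $\mathcal T$. Then for every $v\in C_1$ there is a unique $\tau_v\in\mathcal T$ with $v$ a vertex of $\tau_v$; conversely, every $\tau\in\mathcal T$ has exactly one vertex belonging to $C_1$.
   Context: $G$ is a finite simple connected graph 2-cell embedded in the sphere; $|\sigma|$ is the length of the boundary walk of face $\sigma$; $F(v)$ is the multiset of faces incident to $v$ (one per corner) and the face vector $f(v)$ is the multiset of their sizes, written in nondecreasing order. $K(v)=1-\frac{\deg(v)}{2}+\sum_{\sigma\in F(v)}\frac1{|\sigma|}$. A prism (resp. antiprism) of order $N$ is the planar graph with $2N$ vertices, two $N$-faces and $N$ quadrilaterals (resp. $2N$ triangles), each vertex incident to two quadrilaterals and one $N$-face (resp. three triangles and one $N$-face). A planar PCC graph is such a $G$ with $K(v)>0$, $\deg(v)\ge3$ for all $v$, not a prism or antiprism. *)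

(* Planar maps are encoded as combinatorial maps
   (rotation systems): darts, a fixed-point-free involution [alpha]
   (the two half-edges of an edge), a permutation [sigma] (rotation of
   darts around their tail vertex). Vertices = sigma-orbits, edges =
   alpha-orbits, faces = orbits of phi := sigma \o alpha. *)
From HB Require Import structures.
From mathcomp Require Import all_boot all_order all_algebra.
Set Implicit Arguments. Unset Strict Implicit. Unset Printing Implicit Defensive.
Import Order.TTheory GRing.Theory Num.Theory.

Record rotmap := RotMap {
  dart : finType;
  alpha : dart -> dart;
  sigma : dart -> dart;
  alphaK : involutive alpha;
  alpha_nofix : forall x, alpha x != x;
  sigma_inj : injective sigma
}.

Section RotMapDefs.
Variable m : rotmap.
Notation D := (dart m).

Definition phi (x : D) : D := @sigma m (@alpha m x).

Definition vertex_of (x : D) : D := froot (@sigma m) x.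
Definition face_of (x : D) : D := froot phi x.
Definition vertices : {set D} := [set x | froots (@sigma m) x].
Definition faces : {set D} := [set x | froots phi x].

Definition deg (x : D) : nat := order (@sigma m) x.
Definition flen (x : D) : nat := order phi x.

(* the corners at the vertex of x are the darts of its sigma-orbit; the
   corner of dart d lies in the face (phi-orbit) of d *)
Definition face_vector (x : D) : seq nat :=
  sort leq [seq flen d | d <- orbit (@sigma m) x].

Definition curvature (x : D) : rat :=
  (1 - (deg x)%:R / 2 + \sum_(d <- orbit (@sigma m) x) ((flen d)%:R)^-1)%R.

Definition face_verts (f : D) : {set D} :=
  [set vertex_of d | d in [set d | fconnect phi f d]].

Definition num_edges : nat := #|D| %/ 2.

Definition map_connected : Prop :=
  forall x y : D, connect [rel a b | (b == @sigma m a) || (b == @alpha m a)] x y.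

Definition no_loops : Prop := forall x : D, ~~ fconnect (@sigma m) x (@alpha m x).
Definition no_multi_edges : Prop :=
  forall x y : D, fconnect (@sigma m) x y -> fconnect (@sigma m) (@alpha m x) (@alpha m y) -> x = y.

(* 2-cell embedded in the sphere: Euler characteristic 2 *)
Definition spherical : Prop :=
  (#|vertices| + #|faces| = num_edges + 2)%N.

Definition simple_spherical_map : Prop :=
  [/\ map_connected, no_loops, no_multi_edges & spherical].

Definition is_prism (N : nat) : Prop :=
  (3 <= N)%N /\ [/\ #|vertices| = (2 * N)%N,
      #|faces| = (N + 2)%N,
      #|[set f in faces | flen f == N]| = (if N == 4 then N + 2 else 2)%N,
      (forall f, f \in faces -> (flen f == 4) || (flen f == N))
    & (forall v, face_vector v = sort leq [:: 4; 4; N])].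

Definition is_antiprism (N : nat) : Prop :=
  (3 <= N)%N /\ [/\ #|vertices| = (2 * N)%N,
      #|faces| = (2 * N + 2)%N,
      #|[set f in faces | flen f == N]| = (if N == 3 then 2 * N + 2 else 2)%N,
      (forall f, f \in faces -> (flen f == 3) || (flen f == N))
    & (forall v, face_vector v = sort leq [:: 3; 3; 3; N])].

Definition planar_PCC : Prop :=
  [/\ simple_spherical_map,
      (forall v : D, (0 < curvature v)%R),
      (forall v : D, 3 <= deg v)%N,
      (forall N, ~ is_prism N)
    & (forall N, ~ is_antiprism N)].

Definition A156 (s : D) : {set D} :=
  [set v in face_verts s |
     (face_vector v == [:: 3; 3; 3; flen s]) ||
     (face_vector v == [:: 3; 5; flen s]) ||
     (face_vector v == [:: 3; 6; flen s])].

Definition Tset (s : D) : {set D} :=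
  [set t in faces | (flen t == 3) &&
     [exists v1 in A156 s, exists v2 in A156 s,
        [&& v1 != v2, v1 \in face_verts t & v2 \in face_verts t]]].

Definition C1 (s : D) : {set D} :=
  [set v in vertices | (v \notin face_verts s) &&
     [exists t in Tset s, v \in face_verts t]].

End RotMapDefs.

(* Everything is forced by the positive curvature at each vertex.  Faces have
   length at least 3 and |sigma| >= 42, so a vertex has at most one corner in
   sigma, and a vertex with a sigma-corner next to two triangles has degree 4.
   Take a triangle of T, with its two vertices in A1 u A5 u A6.  The edge
   joining these two vertices lies on sigma: otherwise the face vectors
   prescribed at its ends produce a strip of triangles attached to sigma at
   both ends, and such a strip propagates along sigma in opposite directions
   until its two ends collide.  A sigma-corner at the third vertex (the apex)
   would produce such a strip as well, so the apex is the unique vertex of the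
   triangle in C1.  Finally, two distinct triangles of T cannot share their
   apex vertex: the two apexes and the two corners preceding them leave too
   little curvature unless that vertex has degree 4 or 5 with a triangle or a
   pentagon in a prescribed position, and following these faces around leads
   back to a second corner of sigma at a vertex that already has one. *)

From HB Require Import structures.
From mathcomp Require Import all_boot all_order all_algebra.
From mathcomp Require Import zify ring lra.
Set Implicit Arguments. Unset Strict Implicit. Unset Printing Implicit Defensive.
Import Order.TTheory GRing.Theory Num.Theory.

Section InjectiveOrbits.
Variables (T : finType) (f : T -> T).
Hypothesis f_inj : injective f.

Lemma order_fconnect x y : fconnect f x y -> order f x = order f y.
Proof.
move=> xy; apply: eq_card => z; rewrite /in_mem /=.
apply/idP/idP => [xz|]; last exact: connect_trans.
by apply: connect_trans xz; rewrite fconnect_sym.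
Qed.

Lemma perm_orbit_fconnect x y : fconnect f x y -> perm_eq (orbit f x) (orbit f y).
Proof.
move=> xy; rewrite fconnect_orbit in xy.
by rewrite (orbitE (cycle_orbit f_inj x) (orbit_uniq f x) xy) perm_sym perm_rot.
Qed.

Lemma order_le1 x : f x = x -> order f x <= 1.
Proof.
by move=> fx; apply: (@order_le_cycle _ _ [:: x]); [rewrite /= fx eqxx | rewrite inE].
Qed.

Lemma order_le2 x : f (f x) = x -> order f x <= 2.
Proof.
by move=> fx; apply: (@order_le_cycle _ _ [:: x; f x]); [rewrite /= fx !eqxx | rewrite inE eqxx].
Qed.

Lemma orbit_order3 x : order f x = 3 -> orbit f x = [:: x; f x; f (f x)].
Proof. by rewrite /orbit => ->. Qed.

Lemma orbit_order4 x : order f x = 4 -> orbit f x = [:: x; f x; f (f x); f (f (f x))].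
Proof. by rewrite /orbit => ->. Qed.

Lemma iter_order3 x : order f x = 3 -> f (f (f x)) = x.
Proof. by move=> o3; have := iter_order f_inj x; rewrite o3. Qed.

Lemma iter_order4 x : order f x = 4 -> f (f (f (f x))) = x.
Proof. by move=> o4; have := iter_order f_inj x; rewrite o4. Qed.

Lemma iter_order5 x : order f x = 5 -> f (f (f (f (f x)))) = x.
Proof. by move=> o5; have := iter_order f_inj x; rewrite o5. Qed.

End InjectiveOrbits.

Section Lemma13p2.
Variables (m : rotmap) (s : dart m).
Local Notation D := (dart m).
Local Notation sg := (@sigma m).
Local Notation al := (@alpha m).
Local Notation ph := (@phi m).
Local Notation V := (fconnect sg).
Local Notation F := (fconnect ph).
Local Notation S := (fconnect ph s).
Implicit Types x y z : D.

Hypothesis loopless : no_loops m.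
Hypothesis simple : no_multi_edges m.
Hypothesis deg_ge3 : forall x : D, (3 <= deg x)%N.
Hypothesis curvature_gt0 : forall x : D, (0 < curvature x)%R.
Hypothesis flen_s_ge42 : (42 <= flen s)%N.

Lemma sg_inj : injective sg. Proof. exact: sigma_inj. Qed.
Lemma alpha_inj : injective al. Proof. exact: can_inj (@alphaK m). Qed.
Lemma phi_inj : injective ph. Proof. by move=> x y /sg_inj /alpha_inj. Qed.
Hint Resolve sg_inj alpha_inj phi_inj : core.

Lemma phiE x : ph x = sg (al x). Proof. by []. Qed.
Lemma phi_alpha x : ph (al x) = sg x. Proof. by rewrite phiE alphaK. Qed.
Lemma alpha_sym_eq x y : al x = y -> x = al y. Proof. by move<-; rewrite alphaK. Qed.

Lemma V_connect_sym : connect_sym (frel sg). Proof. exact: fconnect_sym. Qed.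
Lemma F_connect_sym : connect_sym (frel ph). Proof. exact: fconnect_sym. Qed.
Lemma Vsym x y : V x y = V y x. Proof. exact: V_connect_sym. Qed.
Lemma Fsym x y : F x y = F y x. Proof. exact: F_connect_sym. Qed.
Lemma Vsg x y : V x (sg y) = V x y. Proof. by rewrite -same_fconnect1_r. Qed.
Lemma Vsgl x y : V (sg x) y = V x y. Proof. by rewrite -same_fconnect1. Qed.
Lemma Fph x y : F x (ph y) = F x y. Proof. by rewrite -same_fconnect1_r. Qed.
Lemma Vrefl x : V x x. Proof. exact: connect0. Qed.
Lemma Vtr x y z : V x y -> V y z -> V x z. Proof. exact: connect_trans. Qed.
Lemma Ftr x y z : F x y -> F y z -> F x z. Proof. exact: connect_trans. Qed.
Lemma Vsame x y z : V x y -> V x z -> V y z. Proof. by rewrite Vsym; apply: Vtr. Qed.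
Lemma V_sigma1 x : V x (sg x). Proof. exact: fconnect1. Qed.
Lemma V_alpha_phi x : V (al x) (ph x). Proof. by rewrite phiE Vsg Vrefl. Qed.
Lemma S_phi x : S (ph x) = S x. Proof. exact: Fph. Qed.
Lemma S_alpha x : S (al x) = S (sg x). Proof. by rewrite -phi_alpha S_phi. Qed.

Lemma S_iter_phi x y : S x -> S y -> exists k, iter k ph x = y.
Proof.
move=> Sx Sy; exists (findex ph x y); apply: iter_findex.
by apply: Ftr Sy; rewrite Fsym.
Qed.

Lemma deg_fconnect x y : V x y -> deg x = deg y. Proof. exact: order_fconnect. Qed.
Lemma flen_fconnect x y : F x y -> flen x = flen y. Proof. exact: order_fconnect. Qed.
Lemma flen_phi x : flen (ph x) = flen x.
Proof. by symmetry; apply/flen_fconnect/fconnect1. Qed.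
Lemma flen_alpha x : flen (al x) = flen (sg x). Proof. by rewrite -phi_alpha flen_phi. Qed.
Lemma flen_S x : S x -> flen x = flen s. Proof. by move=> Sx; symmetry; apply: flen_fconnect. Qed.

Lemma flen_S_neq3 x : S x -> flen x <> 3.
Proof. by move/flen_S=> -> e; move: flen_s_ge42; rewrite e. Qed.

Lemma sigma_neq x : sg x <> x.
Proof. by move/order_le1; have := deg_ge3 x; rewrite /deg; case: order => [|[|]]. Qed.

Lemma sigma2_neq x : sg (sg x) <> x.
Proof. by move/order_le2; have := deg_ge3 x; rewrite /deg; case: order => [|[|[|]]]. Qed.

(* A face of length 1 is a loop and a face of length 2 a pair of parallel edges. *)
Lemma flen_ge3 x : (3 <= flen x)%N.
Proof.
rewrite /flen; have := iter_order phi_inj x; have := order_gt0 ph x.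
case: (order ph x) => [|[|[|n]]] //= _ phx.
- have : V x (al x) by rewrite Vsym -{2}phx V_alpha_phi.
  by rewrite (negbTE (loopless x)).
- have phx_al : ph x = al x.
    apply: simple; first by rewrite Vsym V_alpha_phi.
    by rewrite alphaK -{2}phx V_alpha_phi.
  by have := @sigma_neq (al x); rewrite -phiE phx_al.
Qed.

Lemma deg4_orbit x y : deg x = 4 -> V x y ->
  [\/ y = x, y = sg x, y = sg (sg x) | y = sg (sg (sg x))].
Proof.
move=> d4; rewrite fconnect_orbit orbit_order4 // !inE.
by case/or4P => /eqP->; [apply: Or41|apply: Or42|apply: Or43|apply: Or44].
Qed.

Lemma deg3_orbit x y : deg x = 3 -> V x y -> [\/ y = x, y = sg x | y = sg (sg x)].
Proof.
move=> d3; rewrite fconnect_orbit orbit_order3 // !inE.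
by case/or3P => /eqP->; [apply: Or31|apply: Or32|apply: Or33].
Qed.

Lemma deg5_orbit x y : deg x = 5 -> V x y ->
  y = x \/ y = sg x \/ y = sg (sg x) \/ y = sg (sg (sg x)) \/ y = sg (sg (sg (sg x))).
Proof.
move=> d5; rewrite fconnect_orbit /orbit -/(deg x) d5 /= !inE.
by case/orP=> [/eqP->|]; [left | case/orP=> [/eqP->|]; [right; left |
  case/orP=> [/eqP->|]; [do 2 right; left | case/orP=> [/eqP->|/eqP->]; [do 3 right; left | do 4 right]]]].
Qed.

Lemma sigma3_id x : deg x = 3 -> sg (sg (sg x)) = x. Proof. exact: iter_order3. Qed.
Lemma sigma4_id x : deg x = 4 -> sg (sg (sg (sg x))) = x. Proof. exact: iter_order4. Qed.
Lemma sigma5_id x : deg x = 5 -> sg (sg (sg (sg (sg x)))) = x. Proof. exact: iter_order5. Qed.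
Lemma phi3_id x : flen x = 3 -> ph (ph (ph x)) = x. Proof. exact: iter_order3. Qed.

Lemma uniq3P (a b c : D) : a <> b -> a <> c -> b <> c -> uniq [:: a; b; c].
Proof. by move=> ab ac bc; rewrite /= !inE !negb_or; do ! (apply/andP; split); apply/eqP. Qed.

Lemma uniq4P (a b c d : D) : a <> b -> a <> c -> a <> d -> b <> c -> b <> d -> c <> d ->
  uniq [:: a; b; c; d].
Proof. by move=> *; rewrite /= !inE !negb_or; do ! (apply/andP; split); apply/eqP. Qed.

(** * Curvature bounds *)

Local Open Scope ring_scope.

Lemma ler_invn (n k : nat) : (0 < k)%N -> (k <= n)%N -> (n%:R : rat)^-1 <= (k%:R)^-1.
Proof. by move=> k0 kn; rewrite lef_pV2 ?posrE ?ltr0n ?ler_nat // (leq_trans k0). Qed.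

Lemma inv_flen_le3 x : ((flen x)%:R : rat)^-1 <= 1/3.
Proof. by rewrite mul1r; apply: ler_invn => //; apply: flen_ge3. Qed.

Lemma inv_flen_le4 x : flen x <> 3%N -> ((flen x)%:R : rat)^-1 <= 1/4.
Proof.
move=> fx; rewrite mul1r; apply: ler_invn => //.
by have := flen_ge3 x; rewrite leq_eqVlt => /orP[/eqP/esym|].
Qed.

Lemma inv_flen_S x : S x -> ((flen x)%:R : rat)^-1 <= 1/42.
Proof. by move/flen_S->; rewrite mul1r; apply: ler_invn. Qed.

Lemma inv_flen3 (n : nat) : n = 3%N -> (n%:R : rat)^-1 = 1/3.
Proof. by move->; rewrite mul1r. Qed.

Lemma inv_flen6 (n : nat) : n = 6%N -> (n%:R : rat)^-1 = 1/6.
Proof. by move->; rewrite mul1r. Qed.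

Lemma ler5n (n : nat) : (4 <= n)%N -> n <> 4%N -> 5 <= (n%:R : rat).
Proof. by rewrite leq_eqVlt ler_nat => /orP[/eqP/esym|]. Qed.

(* Every corner outside [L] belongs to a face of length at least 3. *)
Lemma curvature_partial_gt0 x (L : seq D) : uniq L -> {subset L <= orbit sg x} ->
  0 < 1 - (deg x)%:R / 2 + \sum_(d <- L) ((flen d)%:R : rat)^-1
        + ((deg x)%:R - (size L)%:R) / 3.
Proof.
move=> uL sL; have := curvature_gt0 x; rewrite /curvature (bigID (mem L)) /=.
have permL : perm_eq [seq d <- orbit sg x | d \in L] L.
  apply: uniq_perm; rewrite ?filter_uniq ?orbit_uniq // => z.
  by rewrite mem_filter andb_idr //; apply: sL.
have sizeL : (size L <= deg x)%N by rewrite /deg -size_orbit uniq_leq_size.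
have count_outL : count (fun d => d \notin L) (orbit sg x) = (deg x - size L)%N.
  have := count_predC (mem L) (orbit sg x).
  by rewrite size_orbit -/(deg x) -size_filter (perm_size permL) => <-; rewrite addKn.
have rest_le : \sum_(d <- orbit sg x | d \notin L) ((flen d)%:R : rat)^-1 <=
               ((deg x)%:R - (size L)%:R) / 3.
  apply: le_trans (_ : _ <= \sum_(d <- orbit sg x | d \notin L) (1 / 3 : rat)) _.
    by apply: ler_sum => d _; apply: inv_flen_le3.
  by rewrite big_const_seq iter_addr_0 count_outL -[_ *+ _]mulr_natr natrB // div1r mulrC.
by rewrite -big_filter (perm_big _ permL); lra.
Qed.

Lemma curvature3_gt0 x (y0 y1 y2 : D) : uniq [:: y0; y1; y2] ->
  V x y0 -> V x y1 -> V x y2 ->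
  0 < 1 - (deg x)%:R / 2 + (((flen y0)%:R)^-1 + (((flen y1)%:R)^-1 + (((flen y2)%:R)^-1
        + 0))) + ((deg x)%:R - 3) / 3 :> rat.
Proof.
move=> u h0 h1 h2.
have sub : {subset [:: y0; y1; y2] <= orbit sg x}.
  by move=> z; rewrite !inE -!fconnect_orbit => /or3P[]/eqP->.
by have := curvature_partial_gt0 u sub; rewrite !big_cons big_nil.
Qed.

Lemma curvature4_gt0 x (y0 y1 y2 y3 : D) : uniq [:: y0; y1; y2; y3] ->
  V x y0 -> V x y1 -> V x y2 -> V x y3 ->
  (4 <= deg x)%N /\
  0 < 1 - (deg x)%:R / 2 + (((flen y0)%:R)^-1 + (((flen y1)%:R)^-1 + (((flen y2)%:R)^-1
        + (((flen y3)%:R)^-1 + 0)))) + ((deg x)%:R - 4) / 3 :> rat.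
Proof.
move=> u h0 h1 h2 h3.
have sub : {subset [:: y0; y1; y2; y3] <= orbit sg x}.
  by move=> z; rewrite !inE -!fconnect_orbit => /or4P[]/eqP->.
split; first by rewrite /deg -size_orbit (uniq_leq_size u sub).
by have := curvature_partial_gt0 u sub; rewrite !big_cons big_nil.
Qed.

Lemma S_vertex_uniq x y : V x y -> S x -> S y -> x = y.
Proof.
move=> xy Sx Sy; apply/eqP; apply: contraT => nxy.
have sub : {subset [:: x; y] <= orbit sg x}.
  by move=> z; rewrite !inE -!fconnect_orbit => /orP[]/eqP->; rewrite ?Vrefl.
have := @curvature_partial_gt0 x [:: x; y]; rewrite /= inE nxy => /(_ isT sub).
rewrite !big_cons big_nil.
have := inv_flen_S Sx; have := inv_flen_S Sy.
have : 3 <= ((deg x)%:R : rat) by rewrite (ler_nat _ 3).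
by move=> *; lra.
Qed.

Lemma S_sigma2_notin x : S x -> ~~ S (sg (sg x)).
Proof.
move=> Sx; apply/negP => S2x; apply: (@sigma2_neq x).
by apply: S_vertex_uniq; rewrite ?Vsgl ?Vrefl.
Qed.

Lemma deg4_two_triangles x0 x1 x2 x3 : uniq [:: x0; x1; x2; x3] ->
  V x0 x1 -> V x0 x2 -> V x0 x3 -> flen x1 = 3 -> flen x2 = 3 -> S x3 ->
  deg x0 = 4 /\ flen x0 = 3.
Proof.
move=> u h1 h2 h3 f1 f2 S3.
have [d4 K] := curvature4_gt0 u (Vrefl x0) h1 h2 h3.
rewrite (inv_flen3 f1) (inv_flen3 f2) in K.
have i3 := inv_flen_S S3; have i0 := inv_flen_le3 x0.
have d_eq4 : deg x0 = 4.
  apply/eqP; apply: contraT => /eqP ne.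
  by have := ler5n d4 ne; move: K i3 i0; clear; move=> *; lra.
split => //; apply/eqP; apply: contraT => /eqP ne.
by have := inv_flen_le4 ne; move: K i3; rewrite d_eq4; clear; move=> *; lra.
Qed.

Lemma deg3_S_pentagon x y : V x y -> S x -> flen y = 5 -> deg x = 3.
Proof.
move=> xy Sx fy.
have nxy : x != y by apply/eqP=> exy; move: flen_s_ge42; rewrite -(flen_S Sx) exy fy.
have sub : {subset [:: x; y] <= orbit sg x}.
  by move=> z; rewrite !inE -!fconnect_orbit => /orP[]/eqP->; rewrite ?Vrefl.
have := @curvature_partial_gt0 x [:: x; y]; rewrite /= inE nxy => /(_ isT sub).
rewrite !big_cons big_nil fy; have := inv_flen_S Sx.
have := deg_ge3 x; rewrite leq_eqVlt => /orP[/eqP <- //|d4].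
have : 4 <= ((deg x)%:R : rat) by rewrite (ler_nat _ 4).
by clear d4 fy; move=> *; exfalso; lra.
Qed.

Lemma deg3_S_pentagon_triangle x : S x -> flen (sg x) = 5 -> deg x = 3 ->
  flen (sg (sg x)) = 3.
Proof.
move=> Sx f1 d3.
have u : uniq [:: x; sg x; sg (sg x)].
  by apply: uniq3P => /esym; [apply: sigma_neq | apply: sigma2_neq | apply: sigma_neq].
have := curvature3_gt0 u (Vrefl x) (V_sigma1 x) (Vtr (V_sigma1 x) (V_sigma1 _)).
rewrite d3 f1; have := inv_flen_S Sx; have := inv_flen_le3 (sg (sg x)).
have [//|ne] := eqVneq (flen (sg (sg x))) 3.
by have := inv_flen_le4 (elimN eqP ne); clear f1 d3; move=> *; exfalso; lra.
Qed.

Local Close Scope ring_scope.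

(** * The vertices of A1, A5 and A6 *)

Definition five_or_six (n : nat) := n = 5 \/ n = 6.

Lemma five_or_six3 : ~ five_or_six 3. Proof. by case. Qed.

Lemma inv_five_or_six (n : nat) : five_or_six n -> ((n%:R : rat)^-1 <= 1/5)%R.
Proof. by case=> ->; rewrite mul1r // lef_pV2 ?posrE // ler_nat. Qed.

(* The corner of [x] itself lies in [sigma]; the pattern lists the other
   corners at its vertex in rotation order, i.e. the face vectors
   (3,3,3,N), (3,5,N) and (3,6,N) of A1, A5 and A6. *)
Definition A_dart x := S x /\
  ((deg x = 4 /\ [/\ flen (sg x) = 3, flen (sg (sg x)) = 3 & flen (sg (sg (sg x))) = 3]) \/
   (deg x = 3 /\ ((flen (sg x) = 3 /\ five_or_six (flen (sg (sg x)))) \/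
                  (five_or_six (flen (sg x)) /\ flen (sg (sg x)) = 3)))).

Definition A_vertex x := exists2 y, V x y & A_dart y.

Lemma A_vertex_V x y : V x y -> A_vertex y -> A_vertex x.
Proof. by move=> xy [z yz Az]; exists z; first exact: Vtr yz. Qed.

Lemma A_dart_deg4 d : A_dart d -> flen (sg d) = 3 -> flen (sg (sg d)) = 3 ->
  deg d = 4 /\ flen (sg (sg (sg d))) = 3.
Proof.
case=> _ [[d4 [_ _ f3]]|[_ [[_ b]|[b _]]]] f1 f2 //.
- by rewrite f2 in b; case: five_or_six3.
- by rewrite f1 in b; case: five_or_six3.
Qed.

Lemma perm_eq_3333 (N a b c : nat) : 3 < N ->
  perm_eq [:: N; a; b; c] [:: 3; 3; 3; N] -> [/\ a = 3, b = 3 & c = 3].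
Proof.
by move=> hN /permP /(_ (pred1 3)) /=; rewrite (gtn_eqF hN) => e; split; lia.
Qed.

Lemma perm_eq_3kN (N k a b : nat) : 3 < k < N ->
  perm_eq [:: N; a; b] [:: 3; k; N] -> (a = 3 /\ b = k) \/ (a = k /\ b = 3).
Proof.
case/andP=> k3 kN h; have N3 := ltn_trans k3 kN.
have := permP h (pred1 3); have := permP h (pred1 k).
rewrite /= (gtn_eqF kN) (gtn_eqF N3) ?(gtn_eqF k3) ?(ltn_eqF k3).
by rewrite eqxx; lia.
Qed.

Lemma A156_A_vertex v : v \in A156 s -> A_vertex v.
Proof.
rewrite inE => /andP[/imsetP[x]]; rewrite inE => Sx -> fv.
have Vvx : V (vertex_of x) x by rewrite Vsym connect_root.
exists x => //; split => //.
have pm l : face_vector (vertex_of x) == l -> perm_eq [seq flen d | d <- orbit sg x] l.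
  move/eqP <-; rewrite /face_vector perm_sym perm_sort perm_sym.
  exact: perm_map (perm_orbit_fconnect sg_inj (connect_root _ x)).
have deg_size l : face_vector (vertex_of x) == l -> deg x = size l.
  by move/pm/perm_size; rewrite size_map size_orbit.
have N6 : 6 < flen s by apply: leq_trans flen_s_ge42.
have fx : flen x = flen s by apply: flen_S.
case/orP: fv => [/orP[]|] fv; have dx := deg_size _ fv; have := pm _ fv.
- rewrite orbit_order4 //= fx; case/perm_eq_3333 => [|-> -> ->]; last by left.
  exact: ltn_trans N6.
- rewrite orbit_order3 //= fx; case/perm_eq_3kN=> [|[-> ->]|[-> ->]].
  + by rewrite /= (ltn_trans _ N6).
  + by right; split => //; left; split => //; left.
  + by right; split => //; right; split => //; left.
- rewrite orbit_order3 //= fx; case/perm_eq_3kN=> [|[-> ->]|[-> ->]].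
  + by rewrite /= N6.
  + by right; split => //; left; split => //; right.
  + by right; split => //; right; split => //; right.
Qed.

(** * Strips of triangles along sigma *)

(* A right (resp. left) strip is an edge leaving the vertex of [sx] whose two
   sides are triangles and whose far end meets [sigma] again at
   [right_end sx]. A strip reproduces itself one step further along [sigma]
   at both ends, in opposite directions, so the two ends would eventually
   meet, which [right_strip_short] excludes. *)
Definition right_end sx := sg (sg (sg (al (sg sx)))).

Definition right_strip sx :=
  [/\ S sx, flen (sg sx) = 3, S (right_end sx) & flen (sg (sg (al (sg sx)))) = 3].

Lemma right_strip_vertex sx : right_strip sx ->
  [/\ deg (al (sg sx)) = 4, flen (al (sg sx)) = 3 & sg (al (sg (sg sx))) = al (right_end sx)].
Proof.
case=> Ssx fc Send fa2; rewrite /right_end in Send *.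
set c := sg sx in fc fa2 Send *; set a := al c in fa2 Send *.
have nSa : ~~ S a by rewrite /a S_alpha; apply: S_sigma2_notin.
have u : uniq [:: a; sg a; sg (sg a); sg (sg (sg a))].
  apply: uniq4P => [/esym|/esym|ea|/esym|/esym|/esym]; try exact: sigma_neq;
    try exact: sigma2_neq.
  by move: Send; rewrite -ea (negbTE nSa).
have fa1 : flen (sg a) = 3 by rewrite -flen_alpha /a alphaK.
have [d4 f3] := deg4_two_triangles u (V_sigma1 a) (Vtr (V_sigma1 _) (V_sigma1 _))
  (Vtr (Vtr (V_sigma1 _) (V_sigma1 _)) (V_sigma1 _)) fa1 fa2 Send.
split => //; have := phi3_id f3.
have -> : ph a = sg c by rewrite phiE /a alphaK.
rewrite [ph (ph _)]phiE -[X in _ = X](sigma4_id d4) => /sg_inj <-.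
by rewrite alphaK.
Qed.

Lemma right_strip_short sx : right_strip sx -> ~ (right_end sx = sx \/ ph (right_end sx) = sx).
Proof.
move=> R; have [d4 f3 T1] := right_strip_vertex R; case=> h.
- have : V (sg sx) (al (sg sx)) by rewrite Vsym -{2}h /right_end !Vsg Vrefl.
  by rewrite (negbTE (loopless _)).
- have h2 : V (al (sg (sg sx))) (ph (right_end sx)) by rewrite phiE -T1 !Vsg Vrefl.
  have : V (sg (sg sx)) (al (sg (sg sx))).
    by rewrite Vsym; apply: Vtr h2 _; rewrite h !Vsg Vrefl.
  by rewrite (negbTE (loopless _)).
Qed.

Lemma right_strip_step sx : right_strip sx ->
  exists sx', [/\ right_strip sx', ph sx' = sx & right_end sx' = ph (right_end sx)].
Proof.
move=> R; have [d4 f3 T1] := right_strip_vertex R; case: R => Ssx fc Send fa2.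
rewrite /right_end in Send T1 *.
set c := sg sx in fc fa2 Send T1 f3 d4 *.
set y := sg (sg (sg (al c))) in Send T1 *.
have Vc k : V sx (iter k sg sx) by apply: fconnect_iter.
have [e|ne] := eqVneq (sg (sg c)) sx.
  have S1 : S (al (sg c)) by rewrite S_alpha e.
  have S2 : S (sg (al y)) by rewrite -phiE S_phi.
  have VV : V (al (sg c)) (sg (al y)) by rewrite -T1 !Vsg Vrefl.
  by have := S_vertex_uniq VV S1 S2; rewrite -T1 => /esym /sigma2_neq.
have u : uniq [:: sg (sg c); c; sg c; sx].
  apply: uniq4P => [|||/esym||]; try exact: sigma_neq; try exact: sigma2_neq.
  exact/eqP.
have fsc : flen (sg c) = 3 by rewrite -flen_alpha f3.
have [d4' f4] := deg4_two_triangles u (Vsame (Vc 3) (Vc 1)) (Vsame (Vc 3) (Vc 2))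
  (Vsame (Vc 3) (Vc 0)) fc fsc Ssx.
have e3 : sg (sg (sg c)) = sx by apply: sigma4_id; rewrite (deg_fconnect (Vc 3)).
have := phi3_id f4; rewrite [ph (ph _)]phiE => /sg_inj /(congr1 al); rewrite alphaK !phiE => t2.
have ey : sg y = al c by rewrite /y sigma4_id.
exists (al (sg (sg c))); split.
- split.
  + by rewrite S_alpha e3.
  + by rewrite -flen_alpha alphaK.
  + by rewrite /right_end t2 T1 -phiE S_phi.
  + by rewrite t2 T1 flen_alpha ey.
- by rewrite phiE alphaK.
- by rewrite /right_end t2 T1.
Qed.

Lemma no_right_strip sx : ~ right_strip sx.
Proof.
move=> R; have [k] : exists k, iter k ph (right_end sx) = sx.
  by case: R => Ssx _ Send _; apply: S_iter_phi.
elim/ltn_ind: k sx R => -[|[|k]] IH sx R end_sx.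
- by apply: (right_strip_short R); left.
- by apply: (right_strip_short R); right.
- have [sx' [R' phsx' end']] := right_strip_step R.
  apply: (IH k _ sx' R') => //.
  by apply: phi_inj; rewrite phsx' -end_sx -iterS end' -iterSr.
Qed.

Definition left_end sx := sg (sg (al (sg (sg sx)))).

Definition left_strip sx :=
  [/\ S sx, flen (sg sx) = 3, flen (sg (sg sx)) = 3 & S (left_end sx)].

Lemma left_strip_deg4 sx : left_strip sx -> deg sx = 4 /\ flen (sg (sg (sg sx))) = 3.
Proof.
case=> Ssx f1 f2 Send; rewrite /left_end in Send.
set c := sg (sg sx) in f2 Send *; set a := al c in Send.
have Vc k : V sx (iter k sg sx) by apply: fconnect_iter.
have [e|ne] := eqVneq (sg c) sx.
  have Sa : S a by rewrite /a S_alpha e.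
  have Va : V a (sg (sg a)) by rewrite !Vsg Vrefl.
  by have := S_vertex_uniq Va Sa Send => /esym /sigma2_neq.
have u : uniq [:: sg c; sg sx; c; sx].
  apply: uniq4P => [/sg_inj|/sg_inj||/esym||]; try exact: sigma_neq;
    try exact: sigma2_neq.
  exact/eqP.
have [d3 f3] := deg4_two_triangles u (Vsame (Vc 3) (Vc 1)) (Vsame (Vc 3) (Vc 2))
  (Vsame (Vc 3) (Vc 0)) f1 f2 Ssx.
by rewrite (deg_fconnect (Vc 3)).
Qed.

Lemma left_strip_vertex sx : left_strip sx ->
  [/\ sg (sg (sg (sg sx))) = sx, deg (al (sg (sg sx))) = 4, flen (al (sg (sg sx))) = 3,
      flen (sg (sg (sg (al (sg (sg sx)))))) = 3 &
      al (sg (al (sg (sg (sg sx))))) = sg (sg (sg (al (sg (sg sx)))))].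
Proof.
move=> L; have [dsx fsc] := left_strip_deg4 L; case: L => Ssx f1 f2 Send.
rewrite /left_end in Send *.
set c := sg (sg sx) in f2 Send fsc *; set a := al c in Send *.
have e4 : sg (sg c) = sx by apply: sigma4_id.
have fa : flen a = 3 by rewrite /a flen_alpha fsc.
have fsa : flen (sg a) = 3 by rewrite -flen_alpha /a alphaK.
have := phi3_id fa; have -> : ph a = sg c by rewrite phiE /a alphaK.
rewrite [ph (ph _)]phiE => t.
have [e3|ne3] := eqVneq (sg (sg (sg a))) a.
  rewrite -[X in _ = X]e3 in t; move/sg_inj/(congr1 al): t; rewrite alphaK => t2.
  have S1 : S (al (sg c)) by rewrite S_alpha e4.
  have S2 : S (sg (al (sg (sg a)))) by rewrite -phiE S_phi.
  have V12 : V (al (sg c)) (sg (sg (al (sg c)))) by rewrite !Vsg Vrefl.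
  by rewrite -t2 in S2; have := S_vertex_uniq V12 S1 S2 => /esym /sigma2_neq.
have u : uniq [:: sg (sg (sg a)); a; sg a; sg (sg a)].
  apply: uniq4P => [|/sg_inj|/sg_inj/sg_inj|/esym|/esym|/esym]; try exact: sigma_neq;
    try exact: sigma2_neq.
  exact/eqP.
have Va k : V a (iter k sg a) by apply: fconnect_iter.
have [da f3] := deg4_two_triangles u (Vsame (Va 3) (Va 0)) (Vsame (Va 3) (Va 1))
  (Vsame (Va 3) (Va 2)) fa fsa Send.
have da' : deg a = 4 by rewrite (deg_fconnect (Va 3)).
split => //; rewrite -[in X in _ = X](sigma4_id da') in t.
exact: sg_inj t.
Qed.

Lemma left_strip_short sx : left_strip sx -> ~ (left_end sx = sx \/ ph (left_end sx) = sx).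
Proof.
move=> L; have [e4 _ _ _ _] := left_strip_vertex L.
have e1 : ph (al (sg (sg (sg sx)))) = sx by rewrite phiE alphaK e4.
case=> h.
- have h1 : V (al (sg (sg sx))) (left_end sx) by rewrite /left_end !Vsg Vrefl.
  have : V (sg (sg sx)) (al (sg (sg sx))).
    by rewrite Vsym; apply: Vtr h1 _; rewrite h !Vsg Vrefl.
  by rewrite (negbTE (loopless _)).
- have /phi_inj h' : ph (left_end sx) = ph (al (sg (sg (sg sx)))) by rewrite e1.
  have h2 : V (al (sg (sg sx))) (al (sg (sg (sg sx)))) by rewrite -h' /left_end !Vsg Vrefl.
  by have := simple (V_sigma1 (sg (sg sx))) h2 => /esym /sigma_neq.
Qed.

Lemma left_strip_step sx : left_strip sx ->
  exists sx', [/\ left_strip sx', ph sx' = sx & left_end sx' = ph (left_end sx)].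
Proof.
move=> L; have [e4 da fa f3 T] := left_strip_vertex L; case: L => Ssx f1 f2 Send.
rewrite /left_end in Send *.
set c := sg (sg sx) in da fa f3 T Send *; set a := al c in da fa f3 T Send *.
have T2 := alpha_sym_eq T.
have ea4 : sg (sg (sg (sg a))) = a by apply: sigma4_id.
have := phi3_id f3; rewrite !phiE -T2.
move=> /sg_inj /(congr1 al); rewrite alphaK => t3.
exists (al (sg c)); split.
- split.
  + by rewrite S_alpha e4.
  + by rewrite T2 flen_alpha ea4.
  + by rewrite T2 -phiE flen_phi.
  + by rewrite /left_end t3 -phiE S_phi.
- by rewrite phiE alphaK e4.
- by rewrite /left_end t3.
Qed.

Lemma no_left_strip sx : ~ left_strip sx.
Proof.
move=> L; have [k] : exists k, iter k ph (left_end sx) = sx.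
  by case: L => Ssx _ _ Send; apply: S_iter_phi.
elim/ltn_ind: k sx L => -[|[|k]] IH sx L end_sx.
- by apply: (left_strip_short L); left.
- by apply: (left_strip_short L); right.
- have [sx' [L' phsx' end']] := left_strip_step L.
  apply: (IH k _ sx' L') => //.
  by apply: phi_inj; rewrite phsx' -end_sx -iterS end' -iterSr.
Qed.

(** * The triangles of T *)

(* A triangle of [Tset s], seen from the dart [t0] of its boundary walk that
   starts at one of its two A-vertices and goes to the other; its apex is the
   vertex of [ph (ph t0)]. *)
Definition T_triangle t0 := [/\ flen t0 = 3, A_vertex t0 & A_vertex (ph t0)].

Lemma triangle_alpha t0 e : flen (al t0) = 3 -> al t0 = sg e -> sg (al (sg t0)) = al e.
Proof.
move=> f ate; have := phi3_id f; rewrite !phiE alphaK ate.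
by move=> /sg_inj /alpha_sym_eq.
Qed.

Lemma edge_case_sigma_phi t0 d e : flen t0 = 3 -> sg d = t0 -> S d ->
  sg (ph t0) = e -> S e -> False.
Proof.
move=> f0 ed Sd ee Se; have t := phi3_id f0.
set t1 := ph t0 in ee t; set t2 := ph t1 in t.
have h1 : al t2 = d by apply: sg_inj; rewrite ed -t.
have S1 : S (sg t2) by rewrite -S_alpha h1.
have S2 : S (al t1) by rewrite S_alpha ee.
have V12 : V (al t1) (sg t2) by rewrite /t2 phiE !Vsg Vrefl.
by have := S_vertex_uniq V12 S2 S1; rewrite /t2 phiE => /esym /sigma2_neq.
Qed.

Lemma edge_case_sigma2_alpha t0 d e : flen t0 = 3 -> deg d = 4 -> sg (sg d) = t0 -> S d ->
  flen (sg (sg (sg d))) = 3 -> al t0 = sg e -> S e -> False.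
Proof.
move=> f0 d4 ed Sd f3 ee Se.
have e2 : sg (sg t0) = d by rewrite -ed sigma4_id.
have S1 : S (al (sg t0)) by rewrite S_alpha e2.
have fa : flen (al t0) = 3 by rewrite flen_alpha -ed.
have T := triangle_alpha fa ee.
have S2 : S (sg (al e)) by rewrite -phiE S_phi.
have V12 : V (al (sg t0)) (sg (al e)) by rewrite -T !Vsg Vrefl.
by have := S_vertex_uniq V12 S1 S2; rewrite -T => /esym /sigma2_neq.
Qed.

Lemma edge_case_sigma_alpha t0 d e : flen t0 = 3 -> sg d = t0 -> A_dart d ->
  deg e = 4 -> al t0 = sg e -> S e -> flen (sg e) = 3 -> False.
Proof.
move=> f0 ed Ad d4e ee Se fse.
have [d4 f3] : deg d = 4 /\ flen (sg (sg (sg d))) = 3.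
  by apply: A_dart_deg4; rewrite // ed // -flen_alpha ee.
rewrite ed in f3.
have e3 : sg (sg (sg t0)) = d by rewrite -ed sigma4_id.
have fa : flen (al t0) = 3 by rewrite ee.
have TA := triangle_alpha fa ee.
apply: (@no_right_strip (al (sg (sg t0)))).
have := phi3_id f3; rewrite !phiE => /sg_inj /(congr1 al); rewrite alphaK => t2.
split.
- by rewrite S_alpha e3; case: Ad.
- by rewrite -flen_alpha alphaK.
- by rewrite /right_end t2 TA -phiE S_phi.
- by rewrite t2 TA flen_alpha -ee.
Qed.

Lemma edge_case_sigma2_phi t0 d e : flen t0 = 3 -> deg d = 4 -> sg (sg d) = t0 -> S d ->
  flen (sg (sg (sg d))) = 3 -> sg (ph t0) = e -> A_dart e -> False.
Proof.
move=> f0 d4 ed Sd f3 ee Ae.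
have e2 : sg (sg t0) = d by rewrite -ed sigma4_id.
have fa : flen (al t0) = 3 by rewrite flen_alpha -ed.
have f1 : flen (ph t0) = 3 by rewrite flen_phi.
have [d4e f1e f3e] : [/\ deg e = 4, flen (sg e) = 3 & flen (sg (sg (sg e))) = 3].
  case: Ae => _ [[? [? _ ?]] //|[d3 fe]].
  have et1 : ph t0 = sg (sg e) by apply: sg_inj; rewrite ee sigma3_id.
  have ea : al t0 = sg e by apply: sg_inj; rewrite -phiE et1.
  by case: fe => -[f5 f6]; [rewrite -et1 f1 in f6 | rewrite -ea fa in f5];
    case: five_or_six3.
have ea : al t0 = sg (sg e).
  by apply: sg_inj; rewrite -phiE; apply: sg_inj; rewrite ee sigma4_id.
apply: (@no_left_strip (al (sg t0))).
have := phi3_id fa; rewrite !phiE alphaK ea => /sg_inj /(congr1 al); rewrite alphaK => t2.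
have := phi3_id f1e; rewrite !phiE -t2 => /sg_inj /alpha_sym_eq t4.
split.
- by rewrite S_alpha e2.
- by rewrite t2 flen_alpha -ea fa.
- by rewrite t2 -phiE flen_phi.
- by rewrite /left_end t4 -phiE S_phi; case: Ae.
Qed.

Lemma A_dart_before_triangle t0 d : flen t0 = 3 -> ~~ S (sg t0) -> V d t0 -> A_dart d ->
  sg d = t0 \/ [/\ deg d = 4, flen (sg (sg (sg d))) = 3 & sg (sg d) = t0].
Proof.
move=> f0 nS Vd [Sd [[d4 [_ _ f3]]|[d3 _]]].
- case/(deg4_orbit d4): Vd => h.
  + by move: f0; rewrite h; move/flen_S_neq3: Sd.
  + by left.
  + by right.
  + by move: nS; rewrite h sigma4_id // Sd.
- case/(deg3_orbit d3): Vd => h.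
  + by move: f0; rewrite h; move/flen_S_neq3: Sd.
  + by left.
  + by move: nS; rewrite h sigma3_id // Sd.
Qed.

Lemma A_dart_after_triangle t0 e : flen t0 = 3 -> ~~ S (al t0) -> V e (ph t0) -> A_dart e ->
  sg (ph t0) = e \/ [/\ deg e = 4, flen (sg e) = 3 & al t0 = sg e].
Proof.
move=> f0 nSa Ve; have f1 : flen (ph t0) = 3 by rewrite flen_phi.
have {}Ve : V e (al t0) by apply: Vtr Ve _; rewrite Vsym V_alpha_phi.
case=> Se [[d4 [f1e _ _]]|[d3 _]].
- case/(deg4_orbit d4): Ve => h.
  + by move: nSa; rewrite h Se.
  + by right.
  + by left; rewrite phiE h sigma4_id.
  + by move: f1; rewrite phiE h sigma4_id; move/flen_S_neq3: Se.
- case/(deg3_orbit d3): Ve => h.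
  + by move: nSa; rewrite h Se.
  + by left; rewrite phiE h sigma3_id.
  + by move: f1; rewrite phiE h sigma3_id; move/flen_S_neq3: Se.
Qed.

(* The edge of the triangle joining its two A-vertices lies on [sigma]:
   [al t0] and [sg t0] are consecutive darts of [sigma]. *)
Lemma T_triangle_edge_S t0 : T_triangle t0 -> S (sg t0).
Proof.
case=> f0 [d Vd Ad] [e Ve Ae]; have [//|nS] := boolP (S (sg t0)); exfalso.
have nSa : ~~ S (al t0) by rewrite S_alpha.
have Sd := proj1 Ad; have Se := proj1 Ae.
rewrite Vsym in Vd; rewrite Vsym in Ve.
case: (A_dart_before_triangle f0 nS Vd Ad) => [hd|[d4 f3 hd]];
  case: (A_dart_after_triangle f0 nSa Ve Ae) => [he|[e4 f1e he]].
- exact: edge_case_sigma_phi f0 hd Sd he Se.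
- exact: edge_case_sigma_alpha f0 hd Ad e4 he Se f1e.
- exact: edge_case_sigma2_phi f0 d4 hd Sd f3 he Ae.
- exact: edge_case_sigma2_alpha f0 d4 hd Sd f3 he Se.
Qed.

Lemma T_triangle_A_darts t0 : T_triangle t0 -> [/\ A_dart (sg t0) & A_dart (al t0)].
Proof.
move=> T0; have St := T_triangle_edge_S T0; case: T0 => f0 [d Vd Ad] [e Ve Ae].
have Sa : S (al t0) by rewrite S_alpha.
have -> : sg t0 = d by apply: S_vertex_uniq (proj1 Ad) => //; rewrite Vsgl.
have -> // : al t0 = e.
by apply: S_vertex_uniq (proj1 Ae) => //; apply: Vtr (V_alpha_phi t0) Ve.
Qed.

Local Open Scope ring_scope.

Lemma flen_apex_corner t0 : flen t0 = 3 -> A_dart (al t0) ->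
  [\/ flen (al (ph t0)) = 3, flen (al (ph t0)) = 5 | flen (al (ph t0)) = 6].
Proof.
move=> f0 Ae; rewrite flen_alpha phiE.
by case: Ae => _ [[_ [_ f2 _]]|[_ [[_ [f5|f6]]|[_ f2]]]];
  [apply: Or31 | apply: Or32 | apply: Or33 | apply: Or31].
Qed.

Lemma T_apex_S_dart_uniq t0 y : T_triangle t0 -> V (ph (ph t0)) y -> S y ->
  uniq [:: al (ph t0); ph (ph t0); sg (ph (ph t0)); y].
Proof.
move=> T0 Vy Sy; have St := T_triangle_edge_S T0.
have [_ Ae] := T_triangle_A_darts T0; case: T0 => f0 _ _.
set t1 := ph t0 in Vy *; set t2 := ph t1 in Vy *.
have t := phi3_id f0; rewrite -/t1 -/t2 in t.
have st2 : sg (al t1) = t2 by [].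
have ny1 : y <> al t1.
  move=> yt1; have := flen_apex_corner f0 Ae; rewrite -/t1 -yt1 (flen_S Sy).
  by case=> e; move: flen_s_ge42; rewrite e.
have ny2 : y <> t2.
  by move=> yt2; apply: (flen_S_neq3 Sy); rewrite yt2 /t2 !flen_phi.
have ny3 : y <> sg t2.
  move=> yt2; have S2 : S (al t2) by rewrite S_alpha -yt2.
  have V2 : V (al t2) (sg t0) by rewrite -t phiE !Vsg Vrefl.
  have := S_vertex_uniq V2 S2 St => h2.
  by apply: (@sigma2_neq t0); rewrite -h2 -phiE.
apply: uniq4P => [/esym|/esym|/esym|/esym|/esym|/esym] //.
- by rewrite -st2; apply: sigma_neq.
- by rewrite -st2; apply: sigma2_neq.
- exact: sigma_neq.
Qed.

(* A dart [y] of [sigma] at the apex would be a fourth corner next to two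
   triangles; the curvature bound forces the apex to have degree 4, which
   fixes the position of [y]. *)
Lemma T_apex_S_dart t0 y : T_triangle t0 -> V (ph (ph t0)) y -> S y ->
  [/\ deg (al t0) = 4, flen (sg (sg (sg (al t0)))) = 3, flen (al (ph t0)) = 3
    & sg y = al (ph t0)].
Proof.
move=> T0 Vy Sy; have u := T_apex_S_dart_uniq T0 Vy Sy.
have [_ Ae] := T_triangle_A_darts T0; case: T0 => f0 _ _.
set t1 := ph t0 in Vy u *; set t2 := ph t1 in Vy u.
have ft2 : flen t2 = 3 by rewrite /t2 !flen_phi.
have Vt2 : V (al t1) t2 by apply: V_sigma1.
have [d4 K] := curvature4_gt0 u (Vrefl _) Vt2 (Vtr Vt2 (V_sigma1 t2)) (Vtr Vt2 Vy).
rewrite (inv_flen3 ft2) in K.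
have iy := inv_flen_S Sy; have i2 := inv_flen_le3 (sg t2); have i1 := inv_flen_le3 (al t1).
have dd : deg (al t1) = 4%N.
  apply/eqP; apply: contraT => /eqP ne.
  by have := ler5n d4 ne; move: K iy i2 i1; clear; move=> *; lra.
have fa1 : flen (al t1) = 3%N.
  case: (flen_apex_corner f0 Ae) => // f56.
  - have := @inv_five_or_six (flen (al t1)) (or_introl f56).
    by move: K iy i2; rewrite dd; clear; move=> *; exfalso; lra.
  - have := @inv_five_or_six (flen (al t1)) (or_intror f56).
    by move: K iy i2; rewrite dd; clear; move=> *; exfalso; lra.
have [d4e f3e] := A_dart_deg4 Ae (etrans (flen_phi t0) f0) (etrans (esym (flen_alpha t1)) fa1).
have dt2 : deg t2 = 4%N by rewrite -(deg_fconnect Vt2).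
have e3 : sg (sg (sg t2)) = al t1 by apply: sg_inj; rewrite sigma4_id.
split => //; case/(deg4_orbit dt2): (Vy) => ey; rewrite ?ey ?e3 //;
  by move: u; rewrite ey ?e3 /= !inE !eqxx ?orbT ?andbF.
Qed.

Local Close Scope ring_scope.

Lemma T_apex_off_S t0 y : T_triangle t0 -> V (ph (ph t0)) y -> ~~ S y.
Proof.
move=> T0 Vy; apply/negP => Sy.
have [d4e f3e fa1 esy] := T_apex_S_dart T0 Vy Sy.
have [_ Ae] := T_triangle_A_darts T0; case: T0 => f0 _ _.
set t1 := ph t0 in fa1 esy.
have f2t1 : flen (sg (sg t1)) = 3 by [].
pose sx := al (sg (sg t1)).
have T1 : sg (al (sg sx)) = al (sg t1).
  by have := phi3_id f2t1; rewrite !phiE -/sx => /sg_inj /alpha_sym_eq.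
have T2 : sg (al (sg t1)) = al y by apply: triangle_alpha; rewrite ?esy.
apply: (@no_right_strip sx); split.
- by rewrite /sx S_alpha /t1 phiE sigma4_id //; case: Ae.
- by rewrite -flen_alpha /sx alphaK.
- by rewrite /right_end T1 T2 -phiE S_phi.
- by rewrite T1 T2 flen_alpha esy.
Qed.

Lemma apex_sigma_apex t0 t0' : flen t0 = 3 -> A_dart (sg t0) -> S (al t0') ->
  flen t0' = 3 -> sg (ph (ph t0)) = ph (ph t0') -> False.
Proof.
move=> f0 Ad Se f0' h; have t := phi3_id f0.
have h2 : ph t0' = al (ph (ph t0)) by apply/alpha_sym_eq/sg_inj; rewrite -phiE h.
have V1 : V (al t0') (sg t0).
  apply: (@Vtr _ (ph t0')); first by rewrite phiE V_sigma1.
  by rewrite h2 -(Vsgl (al _)) -phiE t V_sigma1.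
have e1 := S_vertex_uniq V1 Se (proj1 Ad).
have e2 : sg (sg t0) = al (ph (ph t0)) by rewrite -e1 -phiE.
have e3 : sg (sg (sg t0)) = t0 by rewrite e2 -phiE t.
case: Ad => _ [[d4 _]|[d3 [[_ b]|[b _]]]].
- by have := sigma4_id d4; rewrite e3 => /sigma_neq.
- by rewrite e3 f0 in b; case: five_or_six3.
- by rewrite e2 -h2 flen_phi f0' in b; case: five_or_six3.
Qed.

Lemma apex_sigma_triangle t0 t0' : flen t0 = 3 -> A_dart (sg t0) -> flen t0' = 3 ->
  A_dart (al t0') -> sg (ph (ph t0)) = al (ph t0') -> flen (al (ph t0')) = 3 -> False.
Proof.
move=> f0 Ad f0' Ae h fa; have t := phi3_id f0.
set t2 := ph (ph t0) in h t; set t1' := ph t0' in h fa.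
have st2 : sg (al t2) = t0 by rewrite -phiE.
have fat2 : flen (al t2) = 3 by rewrite flen_alpha h.
have [d4 [fd1 _ _]] : deg (sg t0) = 4 /\
    [/\ flen (sg (sg t0)) = 3, flen (sg (sg (sg t0))) = 3 & flen (sg (sg (sg (sg t0)))) = 3].
  case: (Ad) => _ [//|[d3 fd]].
  have e3 : sg (sg (sg t0)) = t0 by apply: sg_inj; rewrite sigma3_id.
  have ea : al t2 = sg (sg t0) by apply: sg_inj; rewrite st2.
  by case: fd => -[f5 f6]; [rewrite e3 f0 in f6 | rewrite -ea fat2 in f5]; case: five_or_six3.
have ea : al t2 = sg (sg (sg t0)) by apply/sg_inj/sg_inj; rewrite st2 sigma4_id.
have [d4e _] : deg (al t0') = 4 /\ flen (sg (sg (sg (al t0')))) = 3.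
  apply: A_dart_deg4 => //; first by rewrite -phiE flen_phi.
  by rewrite -flen_alpha.
have I1 : sg t1' = al (sg (sg t0)).
  have := phi3_id fa; rewrite !phiE alphaK -h => /sg_inj /alpha_sym_eq.
  by rewrite ea => /sg_inj /alpha_sym_eq.
have I2 : sg (al (sg (sg t1'))) = al (sg t0).
  by have := phi3_id fd1; rewrite !phiE -I1 => /sg_inj /alpha_sym_eq.
have S1 : S (al (sg (sg t1'))) by rewrite S_alpha /t1' phiE sigma4_id //; case: Ae.
have S2 : S (sg (al (sg t0))) by rewrite -phiE S_phi; case: Ad.
have V12 : V (al (sg (sg t1'))) (sg (al (sg t0))) by rewrite -I2 !Vsg Vrefl.
by have := S_vertex_uniq V12 S1 S2; rewrite -I2 => /esym /sigma2_neq.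
Qed.

(* Going around the pentagon [al t2] lands back at the vertex of [sg t0]. *)
Lemma apex_sigma_pentagon t0 t0' : flen t0 = 3 -> A_dart (sg t0) -> flen t0' = 3 ->
  A_dart (al t0') -> sg (ph (ph t0)) = al (ph t0') -> flen (al (ph t0')) = 5 -> False.
Proof.
move=> f0 Ad f0' Ae h fa; have t := phi3_id f0.
set t2 := ph (ph t0) in h t; set t1' := ph t0' in h fa.
have st2 : sg (al t2) = t0 by rewrite -phiE.
have fat2 : flen (al t2) = 5 by rewrite flen_alpha h.
have Sd := proj1 Ad; have Se := proj1 Ae.
have d3 : deg (sg t0) = 3.
  by apply: (deg3_S_pentagon _ Sd fat2); rewrite Vsym -(Vsgl (al t2)) st2 V_sigma1.
have ea : al t2 = sg (sg t0) by apply/sg_inj/sg_inj; rewrite st2 sigma3_id.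
have fst1 : flen (sg t1') = 5 by rewrite -flen_alpha.
have d3e : deg (al t0') = 3.
  by apply: (deg3_S_pentagon _ Se fst1); rewrite /t1' phiE Vsg V_sigma1.
pose sb := al (sg t1'); pose g := sg sb.
have Ssb : S sb by rewrite /sb S_alpha /t1' phiE sigma3_id.
have fg : flen g = 5 by rewrite /g /sb -phiE flen_phi.
have P1 : sg (al g) = al (sg t0).
  have := iter_order5 phi_inj fat2; rewrite [ph (al t2)]phiE alphaK h.
  rewrite [ph (al t1')]phiE alphaK [ph (sg t1')]phiE -/sb -/g !phiE ea.
  by move=> /sg_inj /alpha_sym_eq.
have db : deg sb = 3 by apply: (deg3_S_pentagon (V_sigma1 sb) Ssb fg).
have fsg : flen (sg g) = 3 by apply: deg3_S_pentagon_triangle.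
have da : deg (al g) = 3.
  have Sd1 : S (ph (sg t0)) by rewrite S_phi.
  have fad : flen (al (sg t0)) = 5 by rewrite flen_alpha -ea.
  have <- : deg (ph (sg t0)) = 3.
    by apply: (deg3_S_pentagon _ Sd1 fad); rewrite phiE Vsgl Vrefl.
  by apply: deg_fconnect; rewrite phiE -P1 !Vsg Vrefl.
have fag : flen (al g) = 3 by rewrite flen_alpha.
have I1 : sg (al (sg g)) = al (ph (sg t0)).
  have := phi3_id fag; rewrite !phiE alphaK -[X in _ = X](sigma3_id da) P1 -phiE.
  by move=> /sg_inj /alpha_sym_eq.
have S1 : S (al (sg g)) by rewrite S_alpha /g sigma3_id.
have S2 : S (sg (al (ph (sg t0)))) by rewrite -phiE !S_phi.
have V12 : V (al (sg g)) (sg (al (ph (sg t0)))) by rewrite -I1 !Vsg Vrefl.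
by have := S_vertex_uniq V12 S1 S2; rewrite -I1 => /esym /sigma2_neq.
Qed.

Local Open Scope ring_scope.

Lemma apex_vertex_curvature t0 t0' : flen t0 = 3%N -> flen t0' = 3%N ->
  V (ph (ph t0)) (ph (ph t0')) -> ph (ph t0) <> ph (ph t0') ->
  sg (ph (ph t0)) <> ph (ph t0') -> sg (ph (ph t0')) <> ph (ph t0) ->
  (4 <= deg (ph (ph t0)))%N /\
  0 < 1 - (deg (ph (ph t0)))%:R / 2 + (((flen (al (ph t0)))%:R)^-1 + (1/3 +
      (((flen (al (ph t0')))%:R)^-1 + (1/3 + 0)))) + ((deg (ph (ph t0)))%:R - 4) / 3 :> rat.
Proof.
move=> f0 f0' Vq nq ne1 ne2.
set q1 := ph (ph t0) in Vq nq ne1 ne2 *; set q2 := ph (ph t0') in Vq nq ne1 ne2 *.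
set p1 := al (ph t0); set p2 := al (ph t0').
have sp1 : sg p1 = q1 by []; have sp2 : sg p2 = q2 by [].
have u : uniq [:: p1; q1; p2; q2].
  apply: uniq4P => [/esym|e|e|e|//|/esym].
  - by rewrite -sp1; apply: sigma_neq.
  - by apply: nq; rewrite -sp1 e.
  - by apply: ne2; rewrite -e sp1.
  - by apply: ne1; rewrite e.
  - by rewrite -sp2; apply: sigma_neq.
have V1 : V q1 p1 by rewrite Vsym -sp1 V_sigma1.
have V2 : V q1 p2 by apply: Vtr Vq _; rewrite Vsym -sp2 V_sigma1.
have fq1 : flen q1 = 3%N by rewrite /q1 !flen_phi.
have fq2 : flen q2 = 3%N by rewrite /q2 !flen_phi.
by have := curvature4_gt0 u V1 (Vrefl q1) V2 Vq; rewrite (inv_flen3 fq1) (inv_flen3 fq2).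
Qed.

Lemma apex_vertex_deg45 t0 t0' : flen t0 = 3%N -> flen t0' = 3%N ->
  V (ph (ph t0)) (ph (ph t0')) -> ph (ph t0) <> ph (ph t0') ->
  sg (ph (ph t0)) <> ph (ph t0') -> sg (ph (ph t0')) <> ph (ph t0) ->
  deg (ph (ph t0)) = 4%N \/ deg (ph (ph t0)) = 5%N.
Proof.
move=> f0 f0' Vq nq ne1 ne2; have [d4 K] := apex_vertex_curvature f0 f0' Vq nq ne1 ne2.
have i1 := inv_flen_le3 (al (ph t0)); have i2 := inv_flen_le3 (al (ph t0')).
case: (ltngtP (deg (ph (ph t0))) 5) => [d5|d5|]; [left | exfalso | by right].
  by apply/eqP; rewrite eqn_leq d4 andbT -ltnS.
have : 6 <= ((deg (ph (ph t0)))%:R : rat) by rewrite ler_nat.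
by move: K i1 i2; clear; move=> *; lra.
Qed.

Lemma apex_vertex_next t0 t0' : T_triangle t0 -> T_triangle t0' ->
  V (ph (ph t0)) (ph (ph t0')) -> ph (ph t0) <> ph (ph t0') ->
  sg (ph (ph t0)) <> ph (ph t0') -> sg (ph (ph t0')) <> ph (ph t0) ->
  (sg (ph (ph t0)) = al (ph t0') /\ (flen (al (ph t0')) = 3%N \/ flen (al (ph t0')) = 5%N)) \/
  (sg (ph (ph t0')) = al (ph t0) /\ (flen (al (ph t0)) = 3%N \/ flen (al (ph t0)) = 5%N)).
Proof.
move=> T0 T0' Vq nq ne1 ne2.
have [[f0 _ _] [f0' _ _]] := (T0, T0').
have [_ Ae] := T_triangle_A_darts T0; have [_ Ae'] := T_triangle_A_darts T0'.
have [_ K] := apex_vertex_curvature f0 f0' Vq nq ne1 ne2.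
have hf1 := flen_apex_corner f0 Ae; have hf2 := flen_apex_corner f0' Ae'.
set q1 := ph (ph t0) in Vq nq ne1 ne2 K *; set q2 := ph (ph t0') in Vq nq ne1 ne2 K *.
set p1 := al (ph t0) in K hf1 *; set p2 := al (ph t0') in K hf2 *.
have sp1 : sg p1 = q1 by []; have sp2 : sg p2 = q2 by [].
have i1 := inv_flen_le3 p1; have i2 := inv_flen_le3 p2.
case: (apex_vertex_deg45 f0 f0' Vq nq ne1 ne2) => dq.
- have ep1 : p1 = sg (sg (sg q1)) by apply: sg_inj; rewrite sp1 sigma4_id.
  case/(deg4_orbit dq): (Vq) => eq2.
  + by exfalso; apply: nq; rewrite eq2.
  + by exfalso; apply: ne1; rewrite eq2.
  2: by move: ne2; rewrite eq2 -ep1 sp1.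
  have ep2 : sg q1 = p2 by apply: sg_inj; rewrite sp2.
  have eq2' : sg q2 = p1 by rewrite eq2 ep1.
  case: hf2 => [h2|h2|h2]; [by left; split; [|left] | by left; split; [|right] |].
  case: hf1 => [h1|h1|h1]; [by right; split; [|left] | by right; split; [|right] |].
  have := inv_flen6 h1; have := inv_flen6 h2; have : (deg q1)%:R = 4 :> rat by rewrite dq.
  by move: K; clear; move=> *; exfalso; lra.
- have ep1 : p1 = sg (sg (sg (sg q1))) by apply: sg_inj; rewrite sp1 sigma5_id.
  case/(deg5_orbit dq): (Vq) => [eq2|[eq2|[eq2|[eq2|eq2]]]].
  + by exfalso; apply: nq; rewrite eq2.
  + by exfalso; apply: ne1; rewrite eq2.
  + have ep2 : sg q1 = p2 by apply: sg_inj; rewrite sp2.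
    case: hf2 => [h2|h2|h2]; [by left; split; [|left] | by left; split; [|right] |].
    have := inv_flen6 h2; have : (deg q1)%:R = 5 :> rat by rewrite dq.
    by move: K i1; clear; move=> *; exfalso; lra.
  + have eq2' : sg q2 = p1 by rewrite eq2 ep1.
    case: hf1 => [h1|h1|h1]; [by right; split; [|left] | by right; split; [|right] |].
    have := inv_flen6 h1; have : (deg q1)%:R = 5 :> rat by rewrite dq.
    by move: K i2; clear; move=> *; exfalso; lra.
  + by move: ne2; rewrite eq2 -ep1 sp1.
Qed.

Local Close Scope ring_scope.

Lemma T_apex_vertex_uniq t0 t0' : T_triangle t0 -> T_triangle t0' ->
  V (ph (ph t0)) (ph (ph t0')) -> F t0 t0'.
Proof.
move=> T0 T0' Vq; apply/negPn/negP => nF.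
have [Ad Ae] := T_triangle_A_darts T0; have [Ad' Ae'] := T_triangle_A_darts T0'.
have [f0 _ _] := T0; have [f0' _ _] := T0'.
have nq : ph (ph t0) <> ph (ph t0').
  move=> e; move: nF; have := phi3_id f0; have := phi3_id f0'.
  set q := ph (ph t0) in e *; set q' := ph (ph t0') in e *.
  by move=> <- <-; rewrite e connect0.
have [e|ne1] := eqVneq (sg (ph (ph t0))) (ph (ph t0')).
  by apply: apex_sigma_apex f0 Ad (proj1 Ae') f0' e.
have [e|ne2] := eqVneq (sg (ph (ph t0'))) (ph (ph t0)).
  by apply: apex_sigma_apex f0' Ad' (proj1 Ae) f0 e.
case: (apex_vertex_next T0 T0' Vq nq (elimN eqP ne1) (elimN eqP ne2))
  => [[e [h|h]]|[e [h|h]]].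
- exact: apex_sigma_triangle f0 Ad f0' Ae' e h.
- exact: apex_sigma_pentagon f0 Ad f0' Ae' e h.
- exact: apex_sigma_triangle f0' Ad' f0 Ae e h.
- exact: apex_sigma_pentagon f0' Ad' f0 Ae e h.
Qed.

(** * Counting *)

Lemma eq_vertex_of x y : (vertex_of x == vertex_of y) = V x y.
Proof. exact: (root_connect V_connect_sym). Qed.

Lemma face_vertsP t v : reflect (exists2 d, F t d & vertex_of d = v) (v \in face_verts t).
Proof.
apply: (iffP imsetP) => [[d]|[d Fd <-]]; last by exists d; rewrite ?inE.
by rewrite inE => Fd ->; exists d.
Qed.

Lemma triangle_darts t d : flen t = 3 -> F t d -> [\/ d = t, d = ph t | d = ph (ph t)].
Proof.
move=> f3; rewrite fconnect_orbit orbit_order3 // !inE.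
by case/or3P => /eqP->; [apply: Or31|apply: Or32|apply: Or33].
Qed.

Lemma Tset_T_triangle t : t \in Tset s -> exists2 t0, F t t0 & T_triangle t0.
Proof.
rewrite inE => /and3P[_ /eqP f3 /existsP[v1 /andP[/A156_A_vertex A1]]].
move=> /existsP[v2 /andP[/A156_A_vertex A2 /and3P[n12 /face_vertsP[d1 F1 r1]]]].
case/face_vertsP=> d2 F2 r2.
have P1 : A_vertex d1 by apply: A_vertex_V A1; rewrite -r1 connect_root.
have P2 : A_vertex d2 by apply: A_vertex_V A2; rewrite -r2 connect_root.
have nd : d1 <> d2 by move=> e; move: n12; rewrite -r1 -r2 e eqxx.
have t3 := phi3_id f3.
have f1 : flen (ph t) = 3 by rewrite flen_phi.
have f2 : flen (ph (ph t)) = 3 by rewrite !flen_phi.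
have Ft1 : F t (ph t) by apply: fconnect1.
have Ft2 : F t (ph (ph t)) by rewrite !Fph connect0.
case/(triangle_darts f3): F1 => e1; case/(triangle_darts f3): F2 => e2; subst d1 d2;
  try by [exfalso; apply: nd].
- by exists t; [exact: connect0 | split].
- by exists (ph (ph t)); last split; rewrite ?t3.
- by exists t; [exact: connect0 | split].
- by exists (ph t); last split.
- by exists (ph (ph t)); last split; rewrite ?t3.
- by exists (ph t); last split.
Qed.

Lemma T_triangle_face_verts t t0 v : F t t0 -> flen t0 = 3 -> v \in face_verts t ->
  [\/ v = vertex_of t0, v = vertex_of (ph t0) | v = vertex_of (ph (ph t0))].
Proof.
move=> Ft f3 /face_vertsP[d Fd <-].
have : F t0 d by apply: Ftr Fd; rewrite Fsym.
by case/(triangle_darts f3) => ->; [apply: Or31|apply: Or32|apply: Or33].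
Qed.

Lemma A_vertex_face_verts x : A_vertex x -> vertex_of x \in face_verts s.
Proof.
by case=> y xy [Sy _]; apply/face_vertsP; exists y => //; apply/eqP; rewrite eq_vertex_of Vsym.
Qed.

Lemma T_apex_notin_S t0 : T_triangle t0 -> vertex_of (ph (ph t0)) \notin face_verts s.
Proof.
move=> T0; apply/negP => /face_vertsP[d Sd e].
have : V (ph (ph t0)) d by rewrite -eq_vertex_of e.
by move/(T_apex_off_S T0); rewrite Sd.
Qed.

Lemma Tset_apex t t0 v : F t t0 -> T_triangle t0 ->
  v \in face_verts t -> v \notin face_verts s -> v = vertex_of (ph (ph t0)).
Proof.
move=> Ft [f3 A0 A1] vt.
by case: (T_triangle_face_verts Ft f3 vt) => // ->; rewrite ?A_vertex_face_verts.
Qed.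

Lemma Tset_C1_card t : t \in Tset s -> #|face_verts t :&: C1 s| = 1.
Proof.
move=> tT; have [t0 Ft T0] := Tset_T_triangle tT.
rewrite (_ : face_verts t :&: C1 s = [set vertex_of (ph (ph t0))]) ?cards1 //.
apply/setP => v; rewrite !inE; apply/andP/eqP => [[vt /and3P[_ nv _]]|->].
  exact: Tset_apex Ft T0 vt nv.
have vt : vertex_of (ph (ph t0)) \in face_verts t.
  by apply/face_vertsP; exists (ph (ph t0)) => //; apply: Ftr Ft _; rewrite !Fph connect0.
split => //; apply/and3P; split; first exact: (roots_root V_connect_sym).
- exact: T_apex_notin_S.
- by apply/existsP; exists t; rewrite tT.
Qed.

Lemma faces_fconnect_eq t t' : t \in faces m -> t' \in faces m -> F t t' -> t = t'.
Proof.
rewrite !inE => /eqP rt /eqP rt' tt'.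
by rewrite -rt -rt'; apply/eqP; rewrite (root_connect F_connect_sym).
Qed.

Lemma C1_Tset_card v : v \in C1 s -> #|[set t in Tset s | v \in face_verts t]| = 1.
Proof.
rewrite inE => /and3P[_ nv /existsP[t /andP[tT vt]]].
rewrite (_ : [set t in Tset s | v \in face_verts t] = [set t]) ?cards1 //.
apply/setP => t'; rewrite in_set1 in_set.
apply/andP/eqP => [[tT' vt']|->]; last by split.
have [t0 Ft T0] := Tset_T_triangle tT; have [t0' Ft' T0'] := Tset_T_triangle tT'.
have Vq : V (ph (ph t0')) (ph (ph t0)).
  by rewrite -eq_vertex_of -(Tset_apex Ft T0 vt nv) -(Tset_apex Ft' T0' vt' nv).
apply: faces_fconnect_eq; [by move: tT'; rewrite inE => /andP[] | by move: tT; rewrite inE => /andP[] |].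
by apply: Ftr Ft' (Ftr (T_apex_vertex_uniq T0' T0 Vq) _); rewrite Fsym.
Qed.

End Lemma13p2.

Theorem lemma13p2 (m : rotmap) (s : dart m) :
  planar_PCC m -> (42 <= flen s)%N ->
  (forall v, v \in C1 s -> #|[set t in Tset s | v \in face_verts t]| = 1%N) /\
  (forall t, t \in Tset s -> #|face_verts t :&: C1 s| = 1%N).
Proof.
move=> [[_ loopless simple _] curvature_gt0 deg_ge3 _ _] flen_s_ge42.
split=> [v|t].
- exact: (C1_Tset_card loopless simple deg_ge3 curvature_gt0 flen_s_ge42).
- exact: (Tset_C1_card loopless simple deg_ge3 curvature_gt0 flen_s_ge42).
Qed.
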